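(* Let $\Sigma$ be a signature and $\mathbf V$ a full subcategory of $\mathbf{Alg}(\Sigma)$. (1) $\mathbf V$ is closed under surjective images, small products and strong subobjects if and only if there exists a class $\{\Lambda_e\}_{e\in\mathbb E}$ of unconditional theories, each $\Lambda_e$ in some language $(\Sigma,X_e)$, such that for every $\Sigma$-algebra $\mathcal A$: $\mathcal A\in\mathbf V$ iff $\mathcal A$ is a model of $\Lambda_e$ for all $e\in\mathbb E$. (2) $\mathbf V$ is closed under split surjective images, small products and strong subobjects if and only if there exists a class $\{\Lambda_e\}_{e\in\mathbb E}$ of theories of type $\mathsf E$, each $\Lambda_e$ in some language $(\Sigma,X_e)$, such that for every $\Sigma$-algebra $\mathcal A$: $\mathcal A\in\mathbf V$ iff $\mathcal A$ is a model of $\Lambda_e$ for all $e\in\mathbb E$.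
   Context: $H$ is a frame with bottom $\bot$. An $H$-fuzzy set is a pair $(A,\mu_A)$ of a set $A$ and a function $\mu_A:A\to H$; an arrow $f:(A,\mu_A)\to(B,\mu_B)$ is a function with $\mu_A(x)\le\mu_B(f(x))$; they form $\mathbf{Fuz}_H$. For $n\ge1$, $(A,\mu_A)^n=(A^n,\mu)$ with $\mu(a_1,\dots,a_n)=\bigwedge_i\mu_A(a_i)$. A signature $\Sigma=(O,\mathrm{ar},C)$ consists of a set $O$ of operation symbols with arity $\mathrm{ar}:O\to\{1,2,3,\dots\}$ and a set $C$ of constant symbols. A language is a pair $\mathcal L=(\Sigma,X)$ with $X$ a set of variables. $\mathrm{Terms}(\mathcal L)$ is the smallest set containing $X\sqcup C$ and containing $f(t_1,\dots,t_{\mathrm{ar}(f)})$ whenever $f\in O$ and all $t_i\in\mathrm{Terms}(\mathcal L)$. A formula is either an equation $s\equiv t$ ($s,t$ terms) or a membership proposition $\mathsf E_l(t)$ with $l\in H$ and $t$ a term. A sequent $\Gamma\vdash\psi$ is a pair of a (possibly infinite) set $\Gamma$ of formulas and a formula $\psi$; $\vdash\psi$ means $\emptyset\vdash\psi$. A fuzzy theory in $\mathcal L$ is a set of sequents. A theory is unconditional if all its sequents have the form $\vdash\phi$; it is of type $\mathsf E$ if all its sequents have the form $\{\mathsf E_{l_i}(x_i)\}_{i\in I}\vdash\phi$ with $x_i\in X$ variables and $l_i\in H$. A $\Sigma$-algebra $\mathcal A=((A,\mu_A),\Sigma^{\mathcal A})$ is an $H$-fuzzy set $(A,\mu_A)$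 together with, for each $f\in O$, an arrow $f^{\mathcal A}:(A,\mu_A)^{\mathrm{ar}(f)}\to(A,\mu_A)$ of $\mathbf{Fuz}_H$ and, for each $c\in C$, an element $c^{\mathcal A}\in A$. A morphism of $\Sigma$-algebras is an arrow of $\mathbf{Fuz}_H$ between the carriers preserving all constants and commuting with all operations; this gives $\mathbf{Alg}(\Sigma)$, whose products are the products of carriers in $\mathbf{Fuz}_H$ (membership the infimum of the components) with componentwise operations and constants. An assignment is a function $\iota:X\to A$; evaluation: $x^{\mathcal A,\iota}=\iota(x)$, $c^{\mathcal A,\iota}=c^{\mathcal A}$, $f(t_1,\dots,t_n)^{\mathcal A,\iota}=f^{\mathcal A}(t_1^{\mathcal A,\iota},\dots,t_n^{\mathcal A,\iota})$. $\mathcal A\vDash_\iota s\equiv t$ iff $s^{\mathcal A,\iota}=t^{\mathcal A,\iota}$; $\mathcal A\vDash_\iota\mathsf E_l(t)$ iff $l\le\mu_A(t^{\mathcal A,\iota})$. $\mathcal A$ satisfies $\Gamma\vdash\psi$ if for every assignment $\iota$ with $\mathcal A\vDash_\iota\phi$ for all $\phi\in\Gamma$ one has $\mathcal A\vDash_\iota\psi$. $\mathcal A$ is a model of a theory $\Lambda$ if it satisfies every sequent of $\Lambda$. Closure conditions on $\mathbf V$: closed under surjective images means that if $\mathcal A\in\mathbf V$ and $e:\mathcal A\to\mathcal B$ is a morphism with surjective underlying function then $\mathcal B\in\mathbf V$; closed under split surjective images means the same for morphisms $e$ whose underlying arrow has a right inverse in $\mathbf{Fuz}_H$; closed under strong subobjects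 means that if $\mathcal B\in\mathbf V$ and $m:\mathcal A\to\mathcal B$ is a morphism whose underlying function is injective with $\mu_B(m(a))=\mu_A(a)$ for all $a$, then $\mathcal A\in\mathbf V$; closed under small products means the product of any set-indexed family of members of $\mathbf V$ is in $\mathbf V$. *)

From Stdlib Require Import Arith.

(* A frame: a complete lattice (arbitrary infima and suprema, indexed by
   families over an arbitrary type) in which binary meets distribute over
   arbitrary joins; it has a bottom element. *)
Record frame := Frame {
  fcar :> Type;
  fle : fcar -> fcar -> Prop;
  fle_refl : forall x, fle x x;
  fle_trans : forall x y z, fle x y -> fle y z -> fle x z;
  fle_antisym : forall x y, fle x y -> fle y x -> x = y;
  finf : forall I : Type, (I -> fcar) -> fcar;
  finf_lb : forall I (f : I -> fcar) i, fle (finf I f) (f i);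
  finf_glb : forall I (f : I -> fcar) x, (forall i, fle x (f i)) -> fle x (finf I f);
  fsup : forall I : Type, (I -> fcar) -> fcar;
  fsup_ub : forall I (f : I -> fcar) i, fle (f i) (fsup I f);
  fsup_lub : forall I (f : I -> fcar) x, (forall i, fle (f i) x) -> fle (fsup I f) x;
  fbot : fcar;
  fbot_le : forall x, fle fbot x;
  fdistr : forall (a : fcar) (I : Type) (f : I -> fcar),
    finf bool (fun b => if b then a else fsup I f)
    = fsup I (fun i => finf bool (fun b => if b then a else f i))
}.
Arguments fle {f0} _ _.
Arguments finf {f0} _ _.
Arguments fsup {f0} _ _.
Arguments fbot {f0}.

Definition idx (n : nat) : Set := { i : nat | i < n }.

Record signature := Signature {
  sop : Type;
  sar : sop -> nat;
  sar_pos : forall o, 1 <= sar o;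
  scst : Type
}.

(* membership of a tuple in (A,mu)^n is the infimum of the memberships of
   its components *)
Record algebra (H : frame) (S : signature) := Algebra {
  acar : Type;
  amu : acar -> H;
  aop : forall o : sop S, (idx (sar S o) -> acar) -> acar;
  aop_fuz : forall (o : sop S) (args : idx (sar S o) -> acar),
      fle (finf (idx (sar S o)) (fun i => amu (args i))) (amu (aop o args));
  acst : scst S -> acar
}.
Arguments acar {H S} _.
Arguments amu {H S} _ _.
Arguments aop {H S} _ _ _.
Arguments acst {H S} _ _.

Definition is_hom {H S} (A B : algebra H S) (h : acar A -> acar B) : Prop :=
  (forall a, fle (amu A a) (amu B (h a))) /\
  (forall c, h (acst A c) = acst B c) /\
  (forall o args, h (aop A o args) = aop B o (fun i => h (args i))).

Definition prod_alg {H S} (I : Type) (F : I -> algebra H S) : algebra H S.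
Proof.
  refine (@Algebra H S (forall i, acar (F i))
            (fun x => finf I (fun i => amu (F i) (x i)))
            (fun o args i => aop (F i) o (fun k => args k i)) _
            (fun c i => acst (F i) c)).
  intros o args. apply finf_glb. intro i.
  eapply fle_trans; [| apply (aop_fuz H S (F i))].
  apply finf_glb. intro k.
  eapply fle_trans; [apply (finf_lb H _ _ k) |].
  exact (finf_lb H I (fun j => amu (F j) (args k j)) i).
Defined.

Definition closed_surj_images {H S} (V : algebra H S -> Prop) : Prop :=
  forall (A B : algebra H S) (e : acar A -> acar B),
    V A -> is_hom A B e -> (forall b, exists a, e a = b) -> V B.

Definition closed_split_surj_images {H S} (V : algebra H S -> Prop) : Prop :=
  forall (A B : algebra H S) (e : acar A -> acar B),
    V A -> is_hom A B e ->
    (exists g : acar B -> acar A,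
        (forall b, fle (amu B b) (amu A (g b))) /\ (forall b, e (g b) = b)) ->
    V B.

Definition closed_strong_subobjects {H S} (V : algebra H S -> Prop) : Prop :=
  forall (A B : algebra H S) (m : acar A -> acar B),
    V B -> is_hom A B m ->
    (forall a a', m a = m a' -> a = a') ->
    (forall a, amu B (m a) = amu A a) -> V A.

Definition closed_products {H S} (V : algebra H S -> Prop) : Prop :=
  forall (I : Type) (F : I -> algebra H S),
    (forall i, V (F i)) -> V (prod_alg I F).

Inductive term (S : signature) (X : Type) : Type :=
| tvar : X -> term S X
| tcst : scst S -> term S X
| tapp : forall o : sop S, (idx (sar S o) -> term S X) -> term S X.
Arguments tvar {S X} _.
Arguments tcst {S X} _.
Arguments tapp {S X} _ _.

Inductive formula (H : frame) (S : signature) (X : Type) : Type :=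
| feq : term S X -> term S X -> formula H S X
| fmem : fcar H -> term S X -> formula H S X.
Arguments feq {H S X} _ _.
Arguments fmem {H S X} _ _.

Record sequent (H : frame) (S : signature) (X : Type) := Sequent {
  shyp : formula H S X -> Prop;
  sconcl : formula H S X
}.
Arguments shyp {H S X} _ _.
Arguments sconcl {H S X} _.

Definition theory (H : frame) (S : signature) (X : Type) :=
  sequent H S X -> Prop.

Definition unconditional {H S X} (L : theory H S X) : Prop :=
  forall s, L s -> forall phi, ~ shyp s phi.

Definition type_E {H S X} (L : theory H S X) : Prop :=
  forall s, L s -> forall phi, shyp s phi ->
    exists (l : fcar H) (x : X), phi = fmem l (tvar x).

Fixpoint eval {H S X} (A : algebra H S) (iota : X -> acar A) (t : term S X)
  : acar A :=
  match t with
  | tvar x => iota x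
  | tcst c => acst A c
  | tapp o args => aop A o (fun i => eval A iota (args i))
  end.

Definition sat {H S X} (A : algebra H S) (iota : X -> acar A)
  (phi : formula H S X) : Prop :=
  match phi with
  | feq s t => eval A iota s = eval A iota t
  | fmem l t => fle l (amu A (eval A iota t))
  end.

Definition sat_seq {H S X} (A : algebra H S) (s : sequent H S X) : Prop :=
  forall iota : X -> acar A,
    (forall phi, shyp s phi -> sat A iota phi) -> sat A iota (sconcl s).

Definition is_model {H S X} (A : algebra H S) (L : theory H S X) : Prop :=
  forall s, L s -> sat_seq A s.

(* Soundness: homomorphisms preserve satisfaction along assignments, so
   equations and memberships pass to products and are reflected by strong
   subobjects; passing to a surjective image needs every assignment into the
   image to lift, which is automatic when there are no hypotheses and, for
   hypotheses [E_l(x)], is exactly what a membership-preserving section gives.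
   Completeness is Birkhoff's argument: for an algebra [A] satisfying every
   sequent valid in [V] with hypotheses [G], take the product of one
   counterexample in [V] for each formula not valid in [V] under [G]; the
   subalgebra generated by the images of the elements of [A] lies in [V] and
   maps onto [A] by term evaluation, with the generators giving a section. *)

From Stdlib Require Import Classical ClassicalEpsilon FunctionalExtensionality ProofIrrelevance.

Section Birkhoff.
Context {H : frame} {S : signature}.

Lemma eval_hom {X} (A B : algebra H S) (h : acar A -> acar B) (iota : X -> acar A) :
  is_hom A B h -> forall t, h (eval A iota t) = eval B (fun x => h (iota x)) t.
Proof.
  intros [_ [Hc Ho]] t. induction t as [x | c | o args IH]; simpl.
  - reflexivity.
  - apply Hc.
  - rewrite Ho. f_equal. apply functional_extensionality. exact IH.
Qed.

Lemma sat_hom {X} (A B : algebra H S) (h : acar A -> acar B) (iota : X -> acar A) phi :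
  is_hom A B h -> sat A iota phi -> sat B (fun x => h (iota x)) phi.
Proof.
  intros Hh. destruct phi as [s t | l t]; simpl; intro Hs.
  - rewrite <- !(eval_hom A B h iota Hh). now rewrite Hs.
  - rewrite <- (eval_hom A B h iota Hh). eapply fle_trans; [exact Hs | apply Hh].
Qed.

Lemma sat_strong_mono {X} (A B : algebra H S) (m : acar A -> acar B) (iota : X -> acar A) phi :
  is_hom A B m -> (forall a a', m a = m a' -> a = a') ->
  (forall a, amu B (m a) = amu A a) ->
  sat B (fun x => m (iota x)) phi -> sat A iota phi.
Proof.
  intros Hm Hinj Hmu. destruct phi as [s t | l t]; simpl.
  - intro Hs. apply Hinj. now rewrite !(eval_hom A B m iota Hm).
  - rewrite <- Hmu, (eval_hom A B m iota Hm). trivial.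
Qed.

Lemma proj_hom (I : Type) (F : I -> algebra H S) (i : I) :
  is_hom (prod_alg I F) (F i) (fun p => p i).
Proof.
  split; [| split]; intros; simpl; try reflexivity.
  apply (finf_lb H I (fun j => amu (F j) (a j)) i).
Qed.

Lemma eval_prod {X} (I : Type) (F : I -> algebra H S) (iota : X -> acar (prod_alg I F)) t :
  eval (prod_alg I F) iota t = fun i => eval (F i) (fun x => iota x i) t.
Proof.
  apply functional_extensionality_dep. intro i.
  exact (eval_hom _ _ _ iota (proj_hom I F i) t).
Qed.

Lemma sat_prod {X} (I : Type) (F : I -> algebra H S) (iota : X -> acar (prod_alg I F)) phi :
  (forall i, sat (F i) (fun x => iota x i) phi) -> sat (prod_alg I F) iota phi.
Proof.
  destruct phi as [s t | l t]; simpl; intro Hi; rewrite !eval_prod.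
  - apply functional_extensionality_dep. exact Hi.
  - apply finf_glb. exact Hi.
Qed.

Lemma sat_seq_prod {X} (I : Type) (F : I -> algebra H S) (s : sequent H S X) :
  (forall i, sat_seq (F i) s) -> sat_seq (prod_alg I F) s.
Proof.
  intros HF iota Hyp. apply sat_prod. intro i. apply HF.
  intros phi Hphi. exact (sat_hom _ _ _ iota phi (proj_hom I F i) (Hyp phi Hphi)).
Qed.

Lemma sat_seq_strong_mono {X} (A B : algebra H S) (m : acar A -> acar B) (s : sequent H S X) :
  is_hom A B m -> (forall a a', m a = m a' -> a = a') ->
  (forall a, amu B (m a) = amu A a) -> sat_seq B s -> sat_seq A s.
Proof.
  intros Hm Hinj Hmu HB iota Hyp. apply (sat_strong_mono A B m iota _ Hm Hinj Hmu).
  apply HB. intros phi Hphi. exact (sat_hom _ _ _ iota phi Hm (Hyp phi Hphi)).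
Qed.

Lemma sat_seq_hom_lift {X} (A B : algebra H S) (e : acar A -> acar B) (s : sequent H S X) :
  is_hom A B e ->
  (forall iB : X -> acar B, (forall phi, shyp s phi -> sat B iB phi) ->
     exists iA : X -> acar A,
       (forall x, e (iA x) = iB x) /\ forall phi, shyp s phi -> sat A iA phi) ->
  sat_seq A s -> sat_seq B s.
Proof.
  intros He Hlift HA iB Hyp.
  destruct (Hlift iB Hyp) as [iA [HeiA HypA]].
  replace iB with (fun x => e (iA x)) by (apply functional_extensionality; exact HeiA).
  exact (sat_hom A B e iA _ He (HA iA HypA)).
Qed.

Lemma sat_seq_surj_unconditional {X} (A B : algebra H S) (e : acar A -> acar B)
    (s : sequent H S X) :
  is_hom A B e -> (forall b, exists a, e a = b) ->
  (forall phi, ~ shyp s phi) -> sat_seq A s -> sat_seq B s.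
Proof.
  intros He Hsurj Hnohyp. apply (sat_seq_hom_lift A B e s He).
  intros iB _. destruct (choice _ (fun x => Hsurj (iB x))) as [iA HiA].
  exists iA. split; [exact HiA |]. intros phi Hphi. contradiction (Hnohyp phi).
Qed.

Lemma sat_seq_split_type_E {X} (A B : algebra H S) (e : acar A -> acar B)
    (g : acar B -> acar A) (s : sequent H S X) :
  is_hom A B e -> (forall b, fle (amu B b) (amu A (g b))) -> (forall b, e (g b) = b) ->
  (forall phi, shyp s phi -> exists l x, phi = fmem l (tvar x)) ->
  sat_seq A s -> sat_seq B s.
Proof.
  intros He Hg Heg HE. apply (sat_seq_hom_lift A B e s He).
  intros iB Hyp. exists (fun x => g (iB x)). split; [intro; apply Heg |].
  intros phi Hphi. destruct (HE phi Hphi) as [l [x ->]].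
  specialize (Hyp _ Hphi). simpl in *. eapply fle_trans; [exact Hyp | apply Hg].
Qed.

Definition axiomatized_by {E : Type} {X : E -> Type} (V : algebra H S -> Prop)
    (L : forall e, theory H S (X e)) : Prop :=
  forall A, V A <-> forall e, is_model A (L e).

Section Axiomatized.
Variables (V : algebra H S -> Prop) (E : Type) (X : E -> Type) (L : forall e, theory H S (X e)).
Hypothesis HL : axiomatized_by V L.

Lemma axiomatized_closed_products : closed_products V.
Proof.
  intros I F HF. apply HL. intros e s Hs. apply sat_seq_prod. intro i.
  exact (proj1 (HL (F i)) (HF i) e s Hs).
Qed.

Lemma axiomatized_closed_strong_subobjects : closed_strong_subobjects V.
Proof.
  intros A B m HB Hm Hinj Hmu. apply HL. intros e s Hs.
  apply (sat_seq_strong_mono A B m s Hm Hinj Hmu). exact (proj1 (HL B) HB e s Hs).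
Qed.

Lemma axiomatized_unconditional_closed_surj_images :
  (forall e, unconditional (L e)) -> closed_surj_images V.
Proof.
  intros HU A B e HA He Hsurj. apply HL. intros e0 s Hs.
  apply (sat_seq_surj_unconditional A B e s He Hsurj (HU e0 s Hs)).
  exact (proj1 (HL A) HA e0 s Hs).
Qed.

Lemma axiomatized_type_E_closed_split_surj_images :
  (forall e, type_E (L e)) -> closed_split_surj_images V.
Proof.
  intros HE A B e HA He [g [Hg Heg]]. apply HL. intros e0 s Hs.
  apply (sat_seq_split_type_E A B e g s He Hg Heg (HE e0 s Hs)).
  exact (proj1 (HL A) HA e0 s Hs).
Qed.

End Axiomatized.

Lemma gen_op_closed {X} (P : algebra H S) (iota : X -> acar P) o
    (args : idx (sar S o) -> {p : acar P | exists t, eval P iota t = p}) :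
  exists t, eval P iota t = aop P o (fun k => proj1_sig (args k)).
Proof.
  destruct (choice _ (fun k => proj2_sig (args k))) as [ts Hts].
  exists (tapp o ts). simpl. f_equal. apply functional_extensionality. exact Hts.
Qed.

Definition gen_alg {X} (P : algebra H S) (iota : X -> acar P) : algebra H S.
Proof.
  refine (@Algebra H S {p : acar P | exists t, eval P iota t = p}
            (fun p => amu P (proj1_sig p))
            (fun o args => exist _ (aop P o (fun k => proj1_sig (args k)))
                                 (gen_op_closed P iota o args)) _
            (fun c => exist _ (acst P c) (ex_intro _ (tcst c) eq_refl))).
  intros o args. apply (aop_fuz H S P).
Defined.

Definition gen_var {X} (P : algebra H S) (iota : X -> acar P) (x : X) : acar (gen_alg P iota) :=
  exist _ (iota x) (ex_intro _ (tvar x) eq_refl).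

Lemma gen_incl_hom {X} (P : algebra H S) (iota : X -> acar P) :
  is_hom (gen_alg P iota) P (@proj1_sig _ _).
Proof. split; [| split]; intros; simpl; try reflexivity. apply fle_refl. Qed.

Lemma gen_incl_inj {X} (P : algebra H S) (iota : X -> acar P) (p q : acar (gen_alg P iota)) :
  proj1_sig p = proj1_sig q -> p = q.
Proof.
  destruct p as [p Hp], q as [q Hq]. simpl. intros <-. f_equal. apply proof_irrelevance.
Qed.

Lemma closed_strong_subobjects_gen_alg {X} (V : algebra H S -> Prop) (P : algebra H S)
    (iota : X -> acar P) :
  closed_strong_subobjects V -> V P -> V (gen_alg P iota).
Proof.
  intros HSub HP. exact (HSub _ P _ HP (gen_incl_hom P iota) (gen_incl_inj P iota) (fun _ => eq_refl)).
Qed.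

Lemma gen_alg_factor {X} (P A : algebra H S) (iP : X -> acar P) (iA : X -> acar A) :
  (forall s t, eval P iP s = eval P iP t -> eval A iA s = eval A iA t) ->
  (forall t, fle (amu P (eval P iP t)) (amu A (eval A iA t))) ->
  exists h : acar (gen_alg P iP) -> acar A,
    is_hom (gen_alg P iP) A h /\ forall x, h (gen_var P iP x) = iA x.
Proof.
  intros Hsep Hmem.
  set (h := fun p : acar (gen_alg P iP) =>
              eval A iA (proj1_sig (constructive_indefinite_description _ (proj2_sig p)))).
  assert (Hh : forall p t, eval P iP t = proj1_sig p -> h p = eval A iA t).
  { intros p t Ht. unfold h.
    destruct (constructive_indefinite_description _ (proj2_sig p)) as [t' Ht']. simpl.
    apply Hsep. now rewrite Ht', Ht. }
  exists h. split; [split; [| split] |].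
  - intro p. destruct (proj2_sig p) as [t Ht]. rewrite (Hh p t Ht).
    change (fle (amu P (proj1_sig p)) (amu A (eval A iA t))). rewrite <- Ht. apply Hmem.
  - intro c. exact (Hh (acst (gen_alg P iP) c) (tcst c) eq_refl).
  - intros o args.
    destruct (choice _ (fun k => proj2_sig (args k))) as [ts Hts].
    rewrite (Hh _ (tapp o ts)).
    + simpl. f_equal. apply functional_extensionality. intro k. symmetry. apply Hh, Hts.
    + simpl. f_equal. apply functional_extensionality. exact Hts.
  - intro x. exact (Hh (gen_var P iP x) (tvar x) eq_refl).
Qed.

Definition valid {X} (V : algebra H S -> Prop) (G : formula H S X -> Prop) (phi : formula H S X) :=
  forall B, V B -> sat_seq B (Sequent H S X G phi).

Lemma counterexample_product {X} (V : algebra H S -> Prop) (G : formula H S X -> Prop) :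
  closed_products V ->
  exists (P : algebra H S) (iP : X -> acar P),
    V P /\ (forall phi, G phi -> sat P iP phi) /\ (forall phi, sat P iP phi -> valid V G phi).
Proof.
  intros HP.
  set (I := {phi : formula H S X | ~ valid V G phi}).
  assert (Hw : forall i : I, exists w : {B : algebra H S & X -> acar B},
     V (projT1 w) /\ (forall psi, G psi -> sat (projT1 w) (projT2 w) psi) /\
     ~ sat (projT1 w) (projT2 w) (proj1_sig i)).
  { intros [phi Hphi]. apply NNPP. intro Hn. apply Hphi.
    intros B HB iota HG. apply NNPP. intro Hs. apply Hn.
    exists (existT _ B iota). simpl. auto. }
  destruct (choice _ Hw) as [w Hw'].
  exists (prod_alg I (fun i => projT1 (w i))), (fun x i => projT2 (w i) x).
  split; [| split].
  - apply HP. intro i. apply Hw'.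
  - intros phi Hphi. apply sat_prod. intro i. exact (proj1 (proj2 (Hw' i)) phi Hphi).
  - intros phi Hphi. apply NNPP. intro Hinv.
    apply (proj2 (proj2 (Hw' (exist _ phi Hinv)))).
    exact (sat_hom _ _ _ _ phi (proj_hom I _ (exist _ phi Hinv)) Hphi).
Qed.

Lemma valid_cover {X} (V : algebra H S -> Prop) (A : algebra H S) (iA : X -> acar A)
    (G : formula H S X -> Prop) :
  closed_products V -> closed_strong_subobjects V ->
  (forall phi, valid V G phi -> sat A iA phi) ->
  exists (C : algebra H S) (h : acar C -> acar A) (g : X -> acar C),
    V C /\ is_hom C A h /\ (forall x, h (g x) = iA x) /\ (forall phi, G phi -> sat C g phi).
Proof.
  intros HP HSub HA.
  destruct (counterexample_product V G HP) as [P [iP [HVP [HGP Hvalid]]]].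
  destruct (gen_alg_factor P A iP iA) as [h [Hh Hhg]].
  - intros s t Hst. apply (HA (feq s t)), Hvalid. exact Hst.
  - intro t. apply (HA (fmem _ t)), Hvalid. apply fle_refl.
  - exists (gen_alg P iP), h, (gen_var P iP). split; [| split; [| split]].
    + exact (closed_strong_subobjects_gen_alg V P iP HSub HVP).
    + exact Hh.
    + exact Hhg.
    + intros phi Hphi.
      apply (sat_strong_mono _ P _ _ phi (gen_incl_hom P iP) (gen_incl_inj P iP) (fun _ => eq_refl)).
      exact (HGP phi Hphi).
Qed.

Definition valid_theory {X} (V : algebra H S -> Prop) (G : formula H S X -> Prop) : theory H S X :=
  fun s => (forall phi, shyp s phi <-> G phi) /\ forall B, V B -> sat_seq B s.

Lemma model_valid_theory {X} (V : algebra H S -> Prop) (A : algebra H S) (iA : X -> acar A)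
    (G : formula H S X -> Prop) :
  is_model A (valid_theory V G) -> (forall phi, G phi -> sat A iA phi) ->
  forall phi, valid V G phi -> sat A iA phi.
Proof.
  intros HA HG phi Hphi. apply (HA (Sequent H S X G phi)); [| exact HG].
  split; [reflexivity | exact Hphi].
Qed.

(* [G A] is the set of hypotheses used to test [A], with the elements of [A]
   as variables. *)
Lemma axiomatized_by_valid_theories (V : algebra H S -> Prop)
    (G : forall A : algebra H S, formula H S (acar A) -> Prop) :
  closed_products V -> closed_strong_subobjects V ->
  (forall A phi, G A phi -> sat A (fun a => a) phi) ->
  (forall A C (h : acar C -> acar A) (g : acar A -> acar C),
     V C -> is_hom C A h -> (forall a, h (g a) = a) ->
     (forall phi, G A phi -> sat C g phi) -> V A) ->
  axiomatized_by V (fun A => valid_theory V (G A)).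
Proof.
  intros HP HSub HGA Hcover A. split.
  - intros HA e s [_ Hs]. exact (Hs A HA).
  - intros HA.
    destruct (valid_cover V A (fun a => a) (G A) HP HSub) as [C [h [g [HC [Hh [Hhg HGC]]]]]].
    + exact (model_valid_theory V A _ (G A) (HA A) (HGA A)).
    + exact (Hcover A C h g HC Hh Hhg HGC).
Qed.

Definition mem_diagram (A : algebra H S) (phi : formula H S (acar A)) : Prop :=
  exists a, phi = fmem (amu A a) (tvar a).

Lemma unconditional_valid_theory {X} (V : algebra H S -> Prop) :
  unconditional (valid_theory V (fun _ : formula H S X => False)).
Proof. intros s [Hs _] phi Hphi. exact (proj1 (Hs phi) Hphi). Qed.

Lemma type_E_valid_theory_mem_diagram (V : algebra H S -> Prop) (A : algebra H S) :
  type_E (valid_theory V (mem_diagram A)).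
Proof.
  intros s [Hs _] phi Hphi. destruct (proj1 (Hs phi) Hphi) as [a ->]. eauto.
Qed.

End Birkhoff.

Theorem theorem55 (H : frame) (S : signature) (V : algebra H S -> Prop) :
  ((closed_surj_images V /\ closed_products V /\ closed_strong_subobjects V)
   <->
   exists (E : Type) (X : E -> Type) (L : forall e, theory H S (X e)),
     (forall e, unconditional (L e)) /\
     (forall A : algebra H S, V A <-> forall e, is_model A (L e)))
  /\
  ((closed_split_surj_images V /\ closed_products V /\ closed_strong_subobjects V)
   <->
   exists (E : Type) (X : E -> Type) (L : forall e, theory H S (X e)),
     (forall e, type_E (L e)) /\
     (forall A : algebra H S, V A <-> forall e, is_model A (L e))).
Proof.
  split; split.
  - intros [Hsurj [HP HSub]].
    exists (algebra H S), acar, (fun A => valid_theory V (fun _ => False)).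
    split; [intro; apply unconditional_valid_theory |].
    apply axiomatized_by_valid_theories; [exact HP | exact HSub | contradiction |].
    intros A C h g HC Hh Hhg _. apply (Hsurj C A h HC Hh). intro a. exists (g a). apply Hhg.
  - intros [E [X [L [HU HL]]]]. repeat split.
    + exact (axiomatized_unconditional_closed_surj_images V E X L HL HU).
    + exact (axiomatized_closed_products V E X L HL).
    + exact (axiomatized_closed_strong_subobjects V E X L HL).
  - intros [Hsplit [HP HSub]].
    exists (algebra H S), acar, (fun A => valid_theory V (mem_diagram A)).
    split; [apply type_E_valid_theory_mem_diagram |].
    apply axiomatized_by_valid_theories; [exact HP | exact HSub | |].
    + intros A phi [a ->]. apply fle_refl.
    + intros A C h g HC Hh Hhg HGC. apply (Hsplit C A h HC Hh). exists g. split; [| exact Hhg].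
      intro a. exact (HGC _ (ex_intro _ a eq_refl)).
  - intros [E [X [L [HE HL]]]]. repeat split.
    + exact (axiomatized_type_E_closed_split_surj_images V E X L HL HE).
    + exact (axiomatized_closed_products V E X L HL).
    + exact (axiomatized_closed_strong_subobjects V E X L HL).
Qed.
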